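(* Let $G=(V,E)$ be an undirected graph and $\mu$ an orientation of its edges. Let $\mathcal D$ be an AD paths decomposition of $(G,\mu)$ with degree at most 1. Coloring each path in $\mathcal D$ using two alternating colors yields an oriented degree-splitting $(E_1,E_2)$ of $(G,\mu)$ with discrepancy at most 1.
   Context: A path here is a trail $P=(v_0,e_1,v_1,\dots,e_k,v_k)$ (a walk with pairwise distinct edges, vertices may repeat; if $v_0=v_k$ it is called a cycle). $P$ is an alternating-directions (AD) path if for every $1\le i<k$, the edges $e_i,e_{i+1}$ are either both oriented (under $\mu$) towards $v_i$ or both oriented away from $v_i$. $v_0$ is an incoming endpoint of $P$ if $e_1$ is oriented towards $v_0$, and an outgoing endpoint otherwise; symmetrically $v_k$ is an incoming endpoint if $e_k$ is oriented towards $v_k$, and an outgoing endpoint otherwise. An AD paths decomposition of $(G,\mu)$ with degree at most $\kappa$ is a partition of $E$ into edge-disjoint AD paths such that each vertex is an incoming endpoint of at most $\kappa$ of these paths and an outgoing endpoint of at most $\kappa$ of these paths. Coloring a path with two alternating colors means consecutive edges $e_i,e_{i+1}$ of the path receive opposite colors (one of two colors). An oriented degree-splitting with discrepancy $\kappa$ is a partition $(E_1,E_2)$ of $E$ such that for every vertex $v$, the numbers of incoming edges at $v$ in $E_1$ and in $E_2$ differ by at most $\kappa$, and the numbers of outgoing edges at $v$ in $E_1$ and in $E_2$ differ by at most $\kappa$. *)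

From mathcomp Require Import all_boot all_order all_algebra.
Set Implicit Arguments. Unset Strict Implicit. Unset Printing Implicit Defensive.

(* A finite undirected graph G = (V, E) together with an orientation mu is
   given by a finite vertex type V, a finite edge type E, and for each edge
   its tail and head under mu: the undirected edge e is {tail e, head e}
   and mu orients it tail e -> head e.  "e is oriented towards v" means
   head e == v. *)

Section ADPaths.
Variables (V E : finType) (tail head : E -> V).

Definition simple_graph : Prop :=
  (forall e, tail e != head e) /\
  injective (fun e => [set tail e; head e]).

Definition joins (e : E) (u v : V) : bool :=
  ((tail e == u) && (head e == v)) || ((tail e == v) && (head e == u)).

(* A path P = (v_0, e_1, v_1, ..., e_k, v_k) is represented as the pair
   (v_0, [:: (e_1, v_1); ...; (e_k, v_k)]). *)
Definition gpath := (V * seq (E * V))%type.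

Definition pstart (P : gpath) : V := P.1.
Definition pedges (P : gpath) : seq E := map fst P.2.
Definition pverts (P : gpath) : seq V := P.1 :: map snd P.2.
Definition plen (P : gpath) : nat := size P.2.

(* P is a trail (a walk with pairwise distinct edges, k >= 1) which is an
   alternating-directions path: for every 1 <= i < k, e_i and e_{i+1} are
   both oriented towards v_i or both away from v_i.  (Indices below are
   0-based: edge e_{i+1} is nth _ (pedges P) i, vertex v_i is
   nth _ (pverts P) i.) *)
Definition is_AD_path (P : gpath) : bool :=
  match P.2 with
  | [::] => false
  | (e1, _) :: _ =>
    let es := pedges P in
    let vs := pverts P in
    let v0 := pstart P in
    [&& uniq es,
        all (fun i => joins (nth e1 es i) (nth v0 vs i) (nth v0 vs i.+1))
            (iota 0 (plen P)) &
        all (fun i => (head (nth e1 es i) == nth v0 vs i.+1)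
                      == (head (nth e1 es i.+1) == nth v0 vs i.+1))
            (iota 0 (plen P).-1)]
  end.

Definition incoming_endpoint (v : V) (P : gpath) : bool :=
  match P.2 with
  | [::] => false
  | (e1, _) :: _ =>
    let v0 := pstart P in
    let vk := last v0 (map snd P.2) in
    let ek := last e1 (pedges P) in
    ((v0 == v) && (head e1 == v0)) || ((vk == v) && (head ek == vk))
  end.

Definition outgoing_endpoint (v : V) (P : gpath) : bool :=
  match P.2 with
  | [::] => false
  | (e1, _) :: _ =>
    let v0 := pstart P in
    let vk := last v0 (map snd P.2) in
    let ek := last e1 (pedges P) in
    ((v0 == v) && (head e1 != v0)) || ((vk == v) && (head ek != vk))
  end.

Definition AD_decomposition (D : seq gpath) (kappa : nat) : Prop :=
  [/\ all is_AD_path D,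
      forall e : E, count (fun P => e \in pedges P) D = 1 &
      (forall v : V, count (incoming_endpoint v) D <= kappa /\
                     count (outgoing_endpoint v) D <= kappa)].

Definition alternating_coloring (D : seq gpath) (col : E -> bool) : Prop :=
  forall P, P \in D ->
    forall i, i.+1 < plen P ->
      forall e0 : E,
        col (nth e0 (pedges P) i) != col (nth e0 (pedges P) i.+1).

Definition oriented_degree_splitting (E1 E2 : {set E}) (kappa : nat) : Prop :=
  [/\ E1 :&: E2 = set0, E1 :|: E2 = [set: E] &
      (forall v : V,
        (absz (#|[set e in E1 | head e == v]|%:Z
               - #|[set e in E2 | head e == v]|%:Z)%R <= kappa)%N /\
        (absz (#|[set e in E1 | tail e == v]|%:Z
               - #|[set e in E2 | tail e == v]|%:Z)%R <= kappa)%N)].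
End ADPaths.

From mathcomp Require Import all_boot all_order all_algebra.
Set Implicit Arguments. Unset Strict Implicit. Unset Printing Implicit Defensive.
Import Order.TTheory GRing.Theory Num.Theory.

(* Give each edge the sign +1 or -1 according to its colour.  At a vertex v,
   the difference between the numbers of edges of E1 and of E2 entering v is
   the signed sum of the edges entering v, and it splits along the paths of
   the decomposition.  When an AD path passes through v, its two consecutive
   edges there are both oriented towards v or both away from v, and they have
   opposite colours, so they cancel: only the end edges of the path that
   enter v at an endpoint survive.  The colours of the two end edges agree
   iff both point forward along the path or both backward, so a path
   entering v at both of its ends contributes 0.  Hence each path
   contributes at most 1 in absolute value, and only if v is one of its
   incoming endpoints, of which there is at most one.  Reversing the
   orientation exchanges incoming and outgoing endpoints and gives the bound
   for outgoing edges. *)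

Section AlternatingWalks.
Variables (V E : finType) (tail head : E -> V) (col : E -> bool).
Hypothesis loopless : forall e, tail e != head e.

Lemma joins_reverse e u w : joins head tail e u w = joins tail head e u w.
Proof. by rewrite /joins orbC andbC [X in _ || X]andbC. Qed.

Lemma joinsC e u w : joins tail head e u w = joins tail head e w u.
Proof. by rewrite /joins orbC. Qed.

Lemma head_joins e u w : joins tail head e u w -> (head e == u) = (head e != w).
Proof.
case/orP=> /andP[/eqP Ht /eqP Hh]; subst u w; have := loopless e; rewrite eqxx //=.
  by rewrite eq_sym => /negPf ->.
by rewrite eq_sym => ->.
Qed.

Lemma tail_joins_l e u w : joins tail head e u w -> (tail e == u) = (head e != u).
Proof.
case/orP=> /andP[/eqP Ht /eqP Hh]; subst u w; have := loopless e; rewrite eqxx //=.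
  by rewrite eq_sym => ->.
by move/negPf.
Qed.

Lemma tail_joins_r e u w : joins tail head e u w -> (tail e == w) = (head e != w).
Proof. by rewrite joinsC; apply: tail_joins_l. Qed.

Fixpoint alt_AD_walk (v0 : V) (ps : seq (E * V)) : bool :=
  match ps with
  | [::] => false
  | (e1, v1) :: ps' => joins tail head e1 v0 v1 &&
      match ps' with
      | [::] => true
      | (e2, _) :: _ =>
        [&& (head e1 == v1) == (head e2 == v1), col e1 != col e2
          & alt_AD_walk v1 ps']
      end
  end.

Lemma alt_AD_walk_of_nth (x0 : E) (y0 : V) v0 ps :
  ps != [::] ->
  (forall i, i < size ps -> joins tail head (nth x0 (map fst ps) i)
     (nth y0 (v0 :: map snd ps) i) (nth y0 (v0 :: map snd ps) i.+1)) ->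
  (forall i, i.+1 < size ps ->
     (head (nth x0 (map fst ps) i) == nth y0 (v0 :: map snd ps) i.+1)
     == (head (nth x0 (map fst ps) i.+1) == nth y0 (v0 :: map snd ps) i.+1)) ->
  (forall i, i.+1 < size ps ->
     col (nth x0 (map fst ps) i) != col (nth x0 (map fst ps) i.+1)) ->
  alt_AD_walk v0 ps.
Proof.
elim: ps v0 => [|[e1 v1] ps IH] v0 //= _ Hjoin Had Hcol.
rewrite (Hjoin 0) //.
case: ps IH Hjoin Had Hcol => [|[e2 v2] ps] IH Hjoin Had Hcol //.
by rewrite (Had 0) ?(Hcol 0) ?IH // => i Hi;
  [apply: (Hjoin i.+1) | apply: (Had i.+1) | apply: (Hcol i.+1)].
Qed.

Local Open Scope ring_scope.

Definition sgn (e : E) : int := if col e then 1 else -1.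

Definition in_imbalance (v : V) : int := \sum_(e | head e == v) sgn e.

Definition endpoint_term (v x : V) (e : E) : int :=
  if (x == v) && (head e == x) then sgn e else 0.

Lemma alt_AD_walk_in_imbalance v v0 e1 v1 ps :
  alt_AD_walk v0 ((e1, v1) :: ps) ->
  \sum_(e <- e1 :: map fst ps | head e == v) sgn e =
  endpoint_term v v0 e1
    + endpoint_term v (last v1 (map snd ps)) (last e1 (map fst ps)).
Proof.
rewrite /endpoint_term; elim: ps v0 e1 v1 => [|[e2 v2] ps IH] v0 e1 v1 /=.
  rewrite andbT big_cons big_nil => /head_joins.
  have [-> /esym/negPf ne1|_ /esym/negbFE h1] := eqVneq (head e1) v0.
    by rewrite ne1 andbF andbT !addr0.
  by rewrite andbF h1 andbT -(eqP h1) add0r addr0.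
case/andP=> J1 /and3P[Had Hcol W2].
rewrite big_mkcond big_cons -big_mkcond /= (IH _ _ _ W2) addrA; congr (_ + _).
have sgn2 : sgn e2 = - sgn e1.
  by move: Hcol; rewrite /sgn; case: (col e1); case: (col e2).
rewrite sgn2 -(eqP Had); move: (head_joins J1).
have [-> /esym/negPf ne1|_ /esym/negbFE h1] := eqVneq (head e1) v0.
  by rewrite ne1 andbF andbT !addr0.
by rewrite andbF h1 andbT -(eqP h1); case: ifP; rewrite ?subrr ?addr0.
Qed.

Lemma alt_AD_walk_end_colors v0 e1 v1 ps :
  alt_AD_walk v0 ((e1, v1) :: ps) ->
  (col e1 == col (last e1 (map fst ps))) =
  ((head e1 == v1) == (head (last e1 (map fst ps)) == last v1 (map snd ps))).
Proof.
elim: ps v0 e1 v1 => [|[e2 v2] ps IH] v0 e1 v1 /=; first by rewrite !eqxx.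
case/andP=> _ /and3P[Had Hcol W2]; move: (IH _ _ _ W2) Hcol; rewrite (eqP Had).
case/andP: W2 => /head_joins -> _.
by case: (col e1); case: (col e2); case: (head e2 == v2); case: (col (last _ _));
  case: (_ == last _ _).
Qed.

Lemma alt_AD_walk_last_joins v0 e1 v1 ps :
  alt_AD_walk v0 ((e1, v1) :: ps) ->
  exists u, joins tail head (last e1 (map fst ps)) u (last v1 (map snd ps)).
Proof.
elim: ps v0 e1 v1 => [|[e2 v2] ps IH] v0 e1 v1 /=; first by rewrite andbT; exists v0.
by case/andP=> _ /and3P[_ _ /IH].
Qed.

Lemma normr_sgn e : `|sgn e| = 1.
Proof. by rewrite /sgn; case: (col e). Qed.

Lemma alt_AD_walk_in_imbalance_bound v (P : gpath V E) :
  alt_AD_walk P.1 P.2 ->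
  `|\sum_(e <- pedges P | head e == v) sgn e| <= (incoming_endpoint head v P)%:R.
Proof.
case: P => v0 [|[e1 v1] ps] //= W; have /andP[J1 _] := W.
have colors := alt_AD_walk_end_colors W.
rewrite /pedges /= (alt_AD_walk_in_imbalance v W) /incoming_endpoint /endpoint_term /=.
set ek := last e1 _; set vk := last v1 _.
case: ifP => [/andP[_ in0]|_]; case: ifP => [/andP[_ ink]|_] /=.
- (* v is the incoming start and the incoming end of P: the end edges cancel *)
  move: colors; rewrite ink -[head e1 == v1]negbK -(head_joins J1) in0 /=.
  by rewrite /sgn; case: (col e1); case: (col ek).
- by rewrite addr0 normr_sgn.
- by rewrite add0r normr_sgn.
- by rewrite addr0 normr0.
Qed.

Lemma outgoing_endpoint_reverse v (P : gpath V E) :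
  alt_AD_walk P.1 P.2 -> outgoing_endpoint head v P = incoming_endpoint tail v P.
Proof.
case: P => v0 [|[e1 v1] ps] //= W; have /andP[J1 _] := W.
have [u Jk] := alt_AD_walk_last_joins W.
by rewrite /outgoing_endpoint /incoming_endpoint /= (tail_joins_l J1) (tail_joins_r Jk).
Qed.

Lemma AD_path_uniq (P : gpath V E) : is_AD_path tail head P -> uniq (pedges P).
Proof. by case: P => v0 [|[e1 v1] ps] // /and3P[]. Qed.

Lemma alt_AD_walk_of_AD_path (P : gpath V E) :
  is_AD_path tail head P ->
  (forall i, (i.+1 < plen P)%N -> forall e0,
     col (nth e0 (pedges P) i) != col (nth e0 (pedges P) i.+1)) ->
  alt_AD_walk P.1 P.2.
Proof.
case: P => v0 [|[e1 v1] ps] // /and3P[_ /allP Hjoin /allP Had] Hcol.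
apply: (alt_AD_walk_of_nth (x0 := e1) (y0 := v0)) => // i Hi;
  [apply: Hjoin | apply: Had | apply: Hcol] => //; by rewrite mem_iota.
Qed.

Lemma in_imbalance_decomposition v (D : seq (gpath V E)) :
  (forall P, P \in D -> uniq (pedges P)) ->
  (forall e, count (fun P => e \in pedges P) D = 1%N) ->
  in_imbalance v = \sum_(P <- D) \sum_(e <- pedges P | head e == v) sgn e.
Proof.
move=> uniqD partD; rewrite /in_imbalance big_mkcond.
transitivity (\sum_(P <- D) \sum_(e : E)
   if e \in pedges P then (if head e == v then sgn e else 0) else 0).
  rewrite exchange_big; apply: eq_bigr => e _.
  by rewrite -big_mkcond big_const_seq partD /= addr0.
apply: eq_big_seq => P /uniqD uniqP.
by rewrite -big_mkcond -big_uniq // -big_mkcond.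
Qed.

Lemma in_imbalance_bound v (D : seq (gpath V E)) :
  (forall P, P \in D -> alt_AD_walk P.1 P.2) ->
  (forall P, P \in D -> uniq (pedges P)) ->
  (forall e, count (fun P => e \in pedges P) D = 1%N) ->
  `|in_imbalance v| <= (count (incoming_endpoint head v) D)%:R.
Proof.
move=> walkD uniqD partD; rewrite (in_imbalance_decomposition v uniqD partD).
apply: le_trans (ler_norm_sum _ _ _) _.
rewrite -sum1_count natr_sum [leRHS]big_mkcond big_seq [leRHS]big_seq.
apply: ler_sum => P /walkD W.
by apply: le_trans (alt_AD_walk_in_imbalance_bound v W) _; case: ifP.
Qed.

Lemma in_imbalance_card v :
  #|[set e in [set e | col e] | head e == v]|%:Z
    - #|[set e in [set e | ~~ col e] | head e == v]|%:Z = in_imbalance v.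
Proof.
rewrite -!natz -!sumr_const !(big_mkcond (fun e => e \in _)) -sumrB.
rewrite /in_imbalance [RHS]big_mkcond; apply: eq_bigr => e _; rewrite !inE /sgn.
by case: (col e); case: (head e == v).
Qed.

End AlternatingWalks.

Lemma alt_AD_walk_reverse (V E : finType) (tail head : E -> V) (col : E -> bool) :
  (forall e, tail e != head e) ->
  forall v0 ps, alt_AD_walk tail head col v0 ps -> alt_AD_walk head tail col v0 ps.
Proof.
move=> loopless v0 ps; elim: ps v0 => [|[e1 v1] ps IH] v0 //=.
case/andP=> J1 W1; rewrite joins_reverse J1 /=.
case: ps IH W1 => [|[e2 v2] ps] IH // /and3P[Had Hcol W2]; rewrite Hcol IH //.
have /andP[J2 _] := W2.
by rewrite (tail_joins_r loopless J1) (tail_joins_l loopless J2) (eqP Had) eqxx.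
Qed.

Theorem theorem4p5 (V E : finType) (tail head : E -> V)
    (D : seq (gpath V E)) (col : E -> bool) :
  simple_graph tail head ->
  AD_decomposition tail head D 1 ->
  alternating_coloring D col ->
  oriented_degree_splitting tail head [set e | col e] [set e | ~~ col e] 1.
Proof.
(* only the absence of loops is needed, not the absence of parallel edges *)
move=> [loopless _] [/allP ADD partD degD] colD.
have loopless' e : head e != tail e by rewrite eq_sym.
have walkD P : P \in D -> alt_AD_walk tail head col P.1 P.2.
  by move=> HP; apply: alt_AD_walk_of_AD_path (ADD P HP) (colD P HP).
have walkD' P : P \in D -> alt_AD_walk head tail col P.1 P.2.
  by move/walkD; apply: alt_AD_walk_reverse.
have uniqD P : P \in D -> uniq (pedges P) by move/ADD/AD_path_uniq.
split; first (by apply/setP => e; rewrite !inE andbN);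
  first (by apply/setP => e; rewrite !inE orbN).
move=> v; have [inD outD] := degD v; split; rewrite -lez_nat abszE in_imbalance_card.
- apply: le_trans (in_imbalance_bound loopless v walkD uniqD partD) _.
  by rewrite natz lez_nat.
- apply: le_trans (in_imbalance_bound loopless' v walkD' uniqD partD) _.
  rewrite natz lez_nat -(eq_in_count (a1 := outgoing_endpoint head v)) // => P /walkD.
  exact: outgoing_endpoint_reverse.
Qed.
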